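(* Let $X,X',Y,Y'$ be nonnegative bivariate random vectors with absolutely continuous joint distribution functions $F,F',G,G'$, respectively, where for $i=1,2$, $Y_i=a_iX_i+c_i$ and $Y_i'=a_iX_i'+d_i$ with $a_i>0$ and $d_i\ge c_i>0$. Suppose $X\le_{CDCPE}X'$ and that either $\overline\varepsilon^*_i(X;t_1,t_2)$ (for $i=1,2$) or $\overline\varepsilon^*_i(X';t_1,t_2)$ (for $i=1,2$) is increasing in $t_1$ and increasing in $t_2$. Then $Y\le_{CDCPE}Y'$, i.e. $\overline\varepsilon^*_i(Y;t_1,t_2)\ge\overline\varepsilon^*_i(Y';t_1,t_2)$ for $i=1,2$ and all $t_1\ge d_1$, $t_2\ge d_2$ where defined.
   Context: For a nonnegative random vector $X$ with joint distribution function $F(x_1,x_2)=P(X_1\le x_1,X_2\le x_2)$ and $t_1,t_2>0$ with $F(t_1,t_2)>0$, the conditional dynamic cumulative past entropies (CDCPE) are $$\overline\varepsilon^*_1(X;t_1,t_2)=-\int_0^{t_1}\frac{F(x_1,t_2)}{F(t_1,t_2)}\log\frac{F(x_1,t_2)}{F(t_1,t_2)}dx_1,\qquad \overline\varepsilon^*_2(X;t_1,t_2)=-\int_0^{t_2}\frac{F(t_1,x_2)}{F(t_1,t_2)}\log\frac{F(t_1,x_2)}{F(t_1,t_2)}dx_2,$$ with $0\log0=0$. For nonnegative bivariate random vectors $X,Y$, we write $X\geq_{CDCPE}Y$ (equivalently $Y\le_{CDCPE}X$) if $\overline\varepsilon^*_i(X;t_1,t_2)\le\overline\varepsilon^*_i(Y;t_1,t_2)$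 for all $t_1,t_2\ge0$ (where defined) and $i=1,2$. *)

From Stdlib Require Import Reals Lra List ClassicalEpsilon.
Open Scope R_scope.

(* Total Riemann integral: RiemannInt if f is Riemann integrable on [a,b], else 0. *)
Definition RInt (f : R -> R) (a b : R) : R :=
  match excluded_middle_informative (inhabited (Riemann_integrable f a b)) with
  | left H => RiemannInt (epsilon H (fun _ => True))
  | right _ => 0
  end.

(* u log u with the convention 0 log 0 = 0 *)
Definition xlnx (u : R) : R := if Rle_dec u 0 then 0 else u * ln u.

(* F-measure of the half-open rectangle (a1,b1] x (a2,b2] *)
Definition rect_mass (F : R -> R -> R) (a1 b1 a2 b2 : R) : R :=
  F b1 b2 - F a1 b2 - F b1 a2 + F a1 a2.

Definition nonneg_bivariate_cdf (F : R -> R -> R) : Prop :=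
  (forall a1 b1 a2 b2, a1 <= b1 -> a2 <= b2 -> 0 <= rect_mass F a1 b1 a2 b2) /\
  (forall x1 x2, x1 < 0 \/ x2 < 0 -> F x1 x2 = 0) /\
  (forall x1 x2 eps, 0 < eps -> exists delta, 0 < delta /\
     forall y1 y2, x1 <= y1 < x1 + delta -> x2 <= y2 < x2 + delta ->
       Rabs (F y1 y2 - F x1 x2) < eps) /\
  (forall eps, 0 < eps -> exists M, forall x1 x2, M <= x1 -> M <= x2 ->
       Rabs (F x1 x2 - 1) < eps).

Record rect := mkRect { r_a1 : R; r_b1 : R; r_a2 : R; r_b2 : R }.
Definition rect_ok (r : rect) : Prop := r_a1 r <= r_b1 r /\ r_a2 r <= r_b2 r.
Definition rect_disjoint (r s : rect) : Prop :=
  r_b1 r <= r_a1 s \/ r_b1 s <= r_a1 r \/ r_b2 r <= r_a2 s \/ r_b2 s <= r_a2 r.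
Definition rect_area (r : rect) : R := (r_b1 r - r_a1 r) * (r_b2 r - r_a2 r).

(* Absolute continuity of the induced measure w.r.t. Lebesgue measure
   (Vitali-type epsilon-delta formulation over finite disjoint rectangle unions). *)
Definition abs_continuous_cdf (F : R -> R -> R) : Prop :=
  forall eps, 0 < eps -> exists delta, 0 < delta /\
    forall l : list rect, Forall rect_ok l -> ForallOrdPairs rect_disjoint l ->
      fold_right (fun r acc => rect_area r + acc) 0 l < delta ->
      fold_right (fun r acc => rect_mass F (r_a1 r) (r_b1 r) (r_a2 r) (r_b2 r) + acc) 0 l < eps.

Definition ac_nonneg_cdf (F : R -> R -> R) : Prop :=
  nonneg_bivariate_cdf F /\ abs_continuous_cdf F.

Definition cdcpe1 (F : R -> R -> R) (t1 t2 : R) : R :=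
  - RInt (fun x1 => xlnx (F x1 t2 / F t1 t2)) 0 t1.
Definition cdcpe2 (F : R -> R -> R) (t1 t2 : R) : R :=
  - RInt (fun x2 => xlnx (F t1 x2 / F t1 t2)) 0 t2.

(* cdcpe_le FX FY  means  X <=_CDCPE Y, i.e. eps*_i(X) >= eps*_i(Y)
   wherever both are defined. *)
Definition cdcpe_le (FX FY : R -> R -> R) : Prop :=
  forall t1 t2, 0 <= t1 -> 0 <= t2 -> 0 < FX t1 t2 -> 0 < FY t1 t2 ->
    cdcpe1 FY t1 t2 <= cdcpe1 FX t1 t2 /\ cdcpe2 FY t1 t2 <= cdcpe2 FX t1 t2.

Definition cdcpe_increasing (F : R -> R -> R) : Prop :=
  (forall t1 t1' t2, 0 < F t1 t2 -> t1 <= t1' ->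
     cdcpe1 F t1 t2 <= cdcpe1 F t1' t2 /\ cdcpe2 F t1 t2 <= cdcpe2 F t1' t2) /\
  (forall t1 t2 t2', 0 < F t1 t2 -> t2 <= t2' ->
     cdcpe1 F t1 t2 <= cdcpe1 F t1 t2' /\ cdcpe2 F t1 t2 <= cdcpe2 F t1 t2').

From Pilot Require Import Defs.
From Stdlib Require Import Reals Lra List Classical ClassicalEpsilon FunctionalExtensionality.
From Coquelicot Require Import Coquelicot.
Open Scope R_scope.

(* Since [G] is [F] shifted by [c] and scaled by [a], the substitution [y = a x + c] gives
   [eps*_i(G; t) = a_i eps*_i(F; (t - c) / a)], and similarly for [G'] with [d]; as [d >= c],
   the point [s' = (t - d) / a] lies below [s = (t - c) / a]. If [eps*(F')] is increasing then
   [eps*(F'; s') <= eps*(F'; s) <= eps*(F; s)]. If [eps*(F)] is increasing we compare at [s'] instead,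
   which needs [F(s') > 0]. This follows from [X <=_CDCPE X']: were [F] zero at a point where [F'] is
   not, then right after its last zero [F] would have arbitrarily small entropy, while the entropy of
   [F'] stays bounded away from 0 there. *)

Lemma ln_le_sub1 x : 0 < x -> ln x <= x - 1.
Proof. intro Hx. pose proof (exp_ineq1_le (ln x)). rewrite exp_ln in H by exact Hx. lra. Qed.

Lemma xlnx_0 : xlnx 0 = 0.
Proof. unfold xlnx. destruct (Rle_dec 0 0); lra. Qed.

Lemma xlnx_le0 r : 0 <= r <= 1 -> xlnx r <= 0.
Proof.
  intro Hr. unfold xlnx. destruct (Rle_dec r 0); [lra|].
  assert (ln r <= 0) by (rewrite <- ln_1; apply ln_le; lra).
  nra.
Qed.

Lemma xlnx_ge_m1 r : 0 <= r <= 1 -> -1 <= xlnx r.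
Proof.
  intro Hr. unfold xlnx. destruct (Rle_dec r 0); [lra|].
  pose proof (ln_le_sub1 (/ r) ltac:(apply Rinv_0_lt_compat; lra)) as Hln.
  rewrite ln_Rinv in Hln by lra.
  assert (r * (- ln r) <= r * (/ r - 1)) by (apply Rmult_le_compat_l; lra).
  replace (r * (/ r - 1)) with (1 - r) in H by (field; lra). lra.
Qed.

Lemma xlnx_le_half alpha r : 0 < alpha <= r -> r <= / 2 -> xlnx r <= - (alpha * ln 2).
Proof.
  intros Hr Hr2. unfold xlnx. destruct (Rle_dec r 0); [lra|].
  assert (ln 2 <= - ln r).
  { rewrite <- ln_Rinv by lra. apply ln_le; [lra|].
    rewrite <- (Rinv_inv 2). apply Rinv_le_contravar; lra. }
  assert (0 < ln 2) by (pose proof ln_lt_2; lra).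
  nra.
Qed.

(* [-ln y = -2 ln (sqrt y) <= 2 (1/sqrt y - 1)], which gives the rate at which [xlnx] vanishes at 0. *)
Lemma Rabs_xlnx_le_sqrt y : 0 < y <= 1 -> Rabs (xlnx y) <= 2 * sqrt y.
Proof.
  intro Hy. unfold xlnx. destruct (Rle_dec y 0); [lra|].
  pose proof (sqrt_lt_R0 _ (proj1 Hy)) as Hs.
  assert (Hyy : y = sqrt y * sqrt y) by (rewrite sqrt_sqrt; lra).
  assert (Hln : ln y = 2 * ln (sqrt y)) by (rewrite Hyy at 1; rewrite ln_mult by lra; ring).
  assert (ln y <= 0) by (rewrite <- ln_1; apply ln_le; lra).
  rewrite Rabs_left1 by nra.
  pose proof (ln_le_sub1 (/ sqrt y) ltac:(apply Rinv_0_lt_compat; lra)) as Hls.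
  rewrite ln_Rinv in Hls by lra.
  assert (y * - ln y <= y * (2 * (/ sqrt y - 1))) by (apply Rmult_le_compat_l; lra).
  assert (y * (2 * (/ sqrt y - 1)) = 2 * sqrt y - 2 * y).
  { set (s := sqrt y) in *. rewrite Hyy. field. lra. }
  lra.
Qed.

Lemma continuity_pt_xlnx x : continuity_pt xlnx x.
Proof.
  destruct (Rtotal_order x 0) as [Hx|[->|Hx]].
  - apply (continuity_pt_locally_ext (fun _ => 0) _ (- x)); [lra| |].
    + intros y Hy. unfold Rdist in Hy. apply Rabs_def2 in Hy. unfold xlnx.
      destruct (Rle_dec y 0); lra.
    + apply continuity_pt_const. intros ? ?; reflexivity.
  - intros eps Heps.
    exists (Rmin 1 ((eps / 2) * (eps / 2))). split.
    { apply Rmin_pos; nra. }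
    intros y [_ Hy]. simpl in *. unfold R_dist in *. rewrite xlnx_0, Rminus_0_r in *.
    destruct (Rle_dec y 0) as [Hy0|Hy0].
    { unfold xlnx. destruct (Rle_dec y 0); [|lra]. rewrite Rabs_R0; lra. }
    rewrite Rabs_right in Hy by lra.
    pose proof (Rmin_l 1 ((eps / 2) * (eps / 2))). pose proof (Rmin_r 1 ((eps / 2) * (eps / 2))).
    pose proof (Rabs_xlnx_le_sqrt y ltac:(lra)).
    assert (sqrt y < eps / 2).
    { rewrite <- (sqrt_square (eps / 2)) by lra. apply sqrt_lt_1; lra. }
    lra.
  - apply (continuity_pt_locally_ext (fun y => y * ln y) _ x); [lra| |].
    + intros y Hy. unfold Rdist in Hy. apply Rabs_def2 in Hy. unfold xlnx.
      destruct (Rle_dec y 0); [lra|reflexivity].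
    + apply continuity_pt_mult; [apply continuity_pt_id|].
      apply derivable_continuous_pt. exists (/ x). apply derivable_pt_lim_ln. exact Hx.
Qed.

(* The consequences of [ac_nonneg_cdf] used below; unlike it, they are symmetric in the two
   coordinates. *)
Definition rect_cdf (F : R -> R -> R) : Prop :=
  (forall a1 b1 a2 b2, a1 <= b1 -> a2 <= b2 -> 0 <= rect_mass F a1 b1 a2 b2) /\
  (forall x1 x2, x1 < 0 \/ x2 < 0 -> F x1 x2 = 0) /\
  (forall eps, 0 < eps -> exists delta, 0 < delta /\
     forall a1 b1 a2 b2, a1 <= b1 -> a2 <= b2 -> (b1 - a1) * (b2 - a2) < delta ->
       rect_mass F a1 b1 a2 b2 < eps).

Definition cont_nonneg_df (phi : R -> R) : Prop :=
  (forall u v, u <= v -> phi u <= phi v) /\ (forall u, u <= 0 -> phi u = 0) /\ continuity phi.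

Lemma ac_rect_cdf F : ac_nonneg_cdf F -> rect_cdf F.
Proof.
  intros [[Hmass [Hzero _]] Hac]. split; [exact Hmass|split; [exact Hzero|]].
  intros eps Heps. destruct (Hac eps Heps) as [delta [Hdelta Hsmall]].
  exists delta. split; [exact Hdelta|].
  intros a1 b1 a2 b2 Ha Hb Harea.
  specialize (Hsmall (mkRect a1 b1 a2 b2 :: nil)). simpl in Hsmall.
  rewrite !Rplus_0_r in Hsmall. apply Hsmall.
  - constructor; [split; assumption|constructor].
  - repeat constructor.
  - unfold rect_area. simpl. lra.
Qed.

Lemma rect_cdf_swap F : rect_cdf F -> rect_cdf (fun x1 x2 => F x2 x1).
Proof.
  unfold rect_cdf, rect_mass. intros [Hmass [Hzero Hac]]. split; [|split].
  - intros a1 b1 a2 b2 Ha Hb. specialize (Hmass a2 b2 a1 b1 Hb Ha). lra.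
  - intros x1 x2 Hx. apply Hzero. tauto.
  - intros eps Heps. destruct (Hac eps Heps) as [delta [Hdelta Hsmall]].
    exists delta. split; [exact Hdelta|].
    intros a1 b1 a2 b2 Ha Hb Harea. rewrite Rmult_comm in Harea.
    specialize (Hsmall a2 b2 a1 b1 Hb Ha Harea). lra.
Qed.

Section CdfSections.

Variable F : R -> R -> R.
Hypothesis HF : rect_cdf F.

Lemma rect_cdf_increment u v x2 : 0 <= x2 -> F v x2 - F u x2 = rect_mass F u v (-1) x2.
Proof.
  intro Hx2. destruct HF as [_ [Hzero _]]. unfold rect_mass.
  rewrite (Hzero v (-1)), (Hzero u (-1)) by lra. ring.
Qed.

Lemma rect_cdf_small_increment x2 eps : 0 <= x2 -> 0 < eps ->
  exists alpha, 0 < alpha /\ forall u v, u <= v -> v - u < alpha -> F v x2 - F u x2 < eps.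
Proof.
  intros Hx2 Heps. destruct HF as [_ [_ Hac]].
  destruct (Hac eps Heps) as [delta [Hdelta Hsmall]].
  exists (delta / (x2 + 1)). split; [apply Rdiv_lt_0_compat; lra|].
  intros u v Huv Hvu. rewrite rect_cdf_increment by exact Hx2.
  apply Hsmall; [lra|lra|].
  apply (Rmult_lt_compat_r (x2 + 1)) in Hvu; [|lra].
  replace (delta / (x2 + 1) * (x2 + 1)) with delta in Hvu by (field; lra). lra.
Qed.

Lemma rect_cdf_section1 x2 : cont_nonneg_df (fun u => F u x2).
Proof.
  pose proof HF as [Hmass [Hzero _]].
  destruct (Rlt_le_dec x2 0) as [Hx2|Hx2].
  { split; [|split].
    - intros u v _. rewrite !Hzero by tauto. lra.
    - intros u _. apply Hzero. tauto.
    - intro x. apply continuity_pt_const. intros u v. rewrite !Hzero by tauto. reflexivity. }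
  assert (Hmono : forall u v, u <= v -> F u x2 <= F v x2).
  { intros u v Huv. pose proof (Hmass u v (-1) x2 Huv ltac:(lra)).
    rewrite <- rect_cdf_increment in H by exact Hx2. lra. }
  split; [exact Hmono|split].
  - intros u Hu. destruct (Rlt_le_dec u 0) as [Hneg|Hnneg]; [apply Hzero; tauto|].
    replace u with 0 by lra.
    pose proof (Hmono (-1) 0 ltac:(lra)) as H0. rewrite (Hzero (-1) x2) in H0 by lra.
    destruct (Rle_lt_or_eq_dec _ _ H0) as [Hpos|Heq]; [|auto].
    destruct (rect_cdf_small_increment x2 _ Hx2 Hpos) as [alpha [Halpha Hsmall]].
    specialize (Hsmall (- alpha / 2) 0 ltac:(lra) ltac:(lra)).
    rewrite (Hzero (- alpha / 2) x2) in Hsmall by lra. lra.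
  - intros x eps Heps.
    destruct (rect_cdf_small_increment x2 eps Hx2 Heps) as [alpha [Halpha Hsmall]].
    exists alpha. split; [exact Halpha|]. intros y [_ Hy]. simpl in *. unfold R_dist in *.
    destruct (Rle_dec x y).
    + rewrite Rabs_right in Hy by lra. pose proof (Hmono x y r). pose proof (Hsmall x y r Hy).
      rewrite Rabs_right; lra.
    + rewrite Rabs_left in Hy by lra. pose proof (Hmono y x ltac:(lra)).
      pose proof (Hsmall y x ltac:(lra) ltac:(lra)). rewrite Rabs_left1; lra.
Qed.

End CdfSections.

Lemma cont_nonneg_df_section1 F x2 : ac_nonneg_cdf F -> cont_nonneg_df (fun x1 => F x1 x2).
Proof. intro HF. exact (rect_cdf_section1 F (ac_rect_cdf F HF) x2). Qed.

Lemma cont_nonneg_df_section2 F x1 : ac_nonneg_cdf F -> cont_nonneg_df (fun x2 => F x1 x2).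
Proof. intro HF. exact (rect_cdf_section1 _ (rect_cdf_swap F (ac_rect_cdf F HF)) x1). Qed.

Lemma cont_nonneg_df_nonneg phi u : cont_nonneg_df phi -> 0 <= phi u.
Proof.
  intros [Hmono [Hzero _]]. destruct (Rle_dec u 0) as [Hu|Hu]; [rewrite Hzero; lra|].
  pose proof (Hmono 0 u ltac:(lra)). rewrite (Hzero 0) in H by lra. exact H.
Qed.

(* Cumulative past entropy of [phi] at [t]; [cdcpe1 F t1 t2] is [cpe (fun x1 => F x1 t2) t1]
   by conversion, and likewise for [cdcpe2]. *)
Definition cpe (phi : R -> R) (t : R) : R :=
  - Defs.RInt (fun x => xlnx (phi x / phi t)) 0 t.

Lemma RInt_total_eq f a b : a <= b -> ex_RInt f a b -> Defs.RInt f a b = RInt f a b.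
Proof.
  intros Hab Hf. unfold Defs.RInt.
  destruct (excluded_middle_informative _) as [H|H].
  - symmetry. apply RInt_Reals.
  - exfalso. apply H. constructor. apply ex_RInt_Reals_0. exact Hf.
Qed.

Lemma RInt_const_R c a b : RInt (fun _ => c) a b = (b - a) * c.
Proof. rewrite RInt_const. reflexivity. Qed.

Lemma RInt_split (h : R -> R) a b c :
  (forall u v, ex_RInt h u v) -> RInt h a c = RInt h a b + RInt h b c.
Proof. intro Hh. rewrite <- (RInt_Chasles h a b c) by apply Hh. reflexivity. Qed.

Section OneVariable.

Variable phi : R -> R.
Hypothesis Hphi : cont_nonneg_df phi.

Lemma continuous_xlnx_ratio c x : continuous (fun x => xlnx (phi x / c)) x.
Proof.
  apply continuity_pt_filterlim.
  apply (continuity_pt_comp (fun x => phi x / c) xlnx); [|apply continuity_pt_xlnx].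
  apply (continuity_pt_mult phi (fun _ => / c)); [apply Hphi|].
  apply continuity_pt_const. intros ? ?; reflexivity.
Qed.

Lemma ex_RInt_xlnx_ratio c a b : ex_RInt (fun x => xlnx (phi x / c)) a b.
Proof.
  apply (ex_RInt_continuous (V := R_CompleteNormedModule)). intros. apply continuous_xlnx_ratio.
Qed.

Lemma cpe_RInt t : 0 <= t -> cpe phi t = - RInt (fun x => xlnx (phi x / phi t)) 0 t.
Proof. intro Ht. unfold cpe. rewrite RInt_total_eq by (auto; apply ex_RInt_xlnx_ratio). reflexivity. Qed.

Lemma cont_nonneg_df_ratio_01 x t : x <= t -> 0 < phi t -> 0 <= phi x / phi t <= 1.
Proof.
  intros Hxt Ht. pose proof (cont_nonneg_df_nonneg phi x Hphi).
  pose proof (proj1 Hphi x t Hxt). split.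
  - apply Rdiv_le_0_compat; lra.
  - apply (Rdiv_le_1 _ _ Ht); lra.
Qed.

(* The integrand vanishes on [(-c/a, 0)], so the substitution [x = a y + c] only rescales. *)
Lemma cpe_affine a c t : 0 < a -> 0 <= c <= t ->
  cpe (fun x => phi ((x - c) / a)) t = a * cpe phi ((t - c) / a).
Proof.
  intros Ha Hct. set (s := (t - c) / a).
  assert (Hs : 0 <= s) by (apply Rdiv_le_0_compat; lra).
  rewrite (cpe_RInt s Hs).
  set (h := fun u => xlnx (phi u / phi s)).
  assert (Hh : forall u v, ex_RInt h u v) by (intros; apply ex_RInt_xlnx_ratio).
  assert (Hlin : forall x, (x - c) / a = / a * x + - c / a) by (intro; field; lra).
  assert (Hcomp : forall u v, ex_RInt (fun x => h (/ a * x + - c / a)) u v).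
  { intros u v. apply (ex_RInt_continuous (V := R_CompleteNormedModule)). intros x _.
    apply (continuous_comp (fun x => / a * x + - c / a) h); [|apply continuous_xlnx_ratio].
    apply continuity_pt_filterlim, derivable_continuous_pt. reg. }
  unfold cpe. change (- Defs.RInt (fun x => h ((x - c) / a)) 0 t = a * - RInt h 0 s).
  rewrite RInt_total_eq; [|lra|].
  2: { apply (ex_RInt_ext (fun x => h (/ a * x + - c / a))); [|apply Hcomp].
       intros x _. rewrite Hlin. reflexivity. }
  rewrite (RInt_ext _ (fun x => scal a (scal (/ a) (h (/ a * x + - c / a)))))
    by (intros; rewrite Hlin; unfold scal; simpl; unfold mult; simpl; field; lra).
  rewrite (RInt_scal (V := R_CompleteNormedModule)), (RInt_comp_lin (V := R_CompleteNormedModule));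
    [|apply Hh|apply (ex_RInt_scal (V := R_CompleteNormedModule)), Hcomp].
  replace (/ a * 0 + - c / a) with (- c / a) by ring.
  replace (/ a * t + - c / a) with s by (unfold s; field; lra).
  rewrite (RInt_split h (- c / a) 0 s Hh).
  rewrite (RInt_ext h (fun _ => 0) (- c / a) 0), RInt_const_R.
  - unfold scal; simpl; unfold mult; simpl. ring.
  - intros x Hx. assert (- c / a <= 0) by (pose proof (Rinv_0_lt_compat a Ha); unfold Rdiv; nra).
    rewrite Rmax_right in Hx by lra. unfold h. rewrite (proj1 (proj2 Hphi) x) by lra.
    unfold Rdiv. rewrite Rmult_0_l. apply xlnx_0.
Qed.

Lemma cpe_le_dist_zero p t : 0 <= p <= t -> phi p = 0 -> 0 < phi t -> cpe phi t <= t - p.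
Proof.
  intros Hpt Hp Ht. rewrite cpe_RInt by lra.
  set (h := fun x => xlnx (phi x / phi t)).
  assert (Hh : forall u v, ex_RInt h u v) by (intros; apply ex_RInt_xlnx_ratio).
  rewrite (RInt_split h 0 p t Hh).
  rewrite (RInt_ext h (fun _ => 0) 0 p), RInt_const_R.
  2: { intros x Hx. rewrite Rmin_left, Rmax_right in Hx by lra.
       pose proof (cont_nonneg_df_nonneg phi x Hphi). pose proof (proj1 Hphi x p ltac:(lra)).
       unfold h. replace (phi x) with 0 by lra. unfold Rdiv. rewrite Rmult_0_l. apply xlnx_0. }
  assert (RInt (fun _ => -1) p t <= RInt h p t).
  { apply RInt_le; [lra|apply ex_RInt_const|apply Hh|].
    intros x Hx. apply xlnx_ge_m1, cont_nonneg_df_ratio_01; lra. }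
  rewrite RInt_const_R in H. lra.
Qed.

Lemma cpe_ge_window w1 w2 t alpha : 0 <= w1 <= w2 -> w2 <= t -> 0 < alpha ->
  (forall x, w1 < x < w2 -> alpha <= phi x / phi t <= / 2) -> 0 < phi t ->
  (w2 - w1) * (alpha * ln 2) <= cpe phi t.
Proof.
  intros Hw Hwt Halpha Hwin Ht. rewrite cpe_RInt by lra.
  set (h := fun x => xlnx (phi x / phi t)).
  assert (Hh : forall u v, ex_RInt h u v) by (intros; apply ex_RInt_xlnx_ratio).
  rewrite (RInt_split h 0 w1 t Hh), (RInt_split h w1 w2 t Hh).
  assert (Hout : forall u v, u <= v <= t -> RInt h u v <= 0).
  { intros u v Huv. rewrite <- (Rmult_0_r (v - u)), <- RInt_const_R.
    apply RInt_le; [lra|apply Hh|apply ex_RInt_const|].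
    intros x Hx. apply xlnx_le0, cont_nonneg_df_ratio_01; lra. }
  assert (RInt h w1 w2 <= RInt (fun _ => - (alpha * ln 2)) w1 w2).
  { apply RInt_le; [lra|apply Hh|apply ex_RInt_const|].
    intros x Hx. apply xlnx_le_half; apply Hwin in Hx; lra. }
  rewrite RInt_const_R in H.
  pose proof (Hout 0 w1 ltac:(lra)). pose proof (Hout w2 t ltac:(lra)). lra.
Qed.

End OneVariable.

Lemma cont_nonneg_df_level phi y v : cont_nonneg_df phi -> 0 < v < phi y ->
  exists w, 0 <= w <= y /\ phi w = v.
Proof.
  intros [_ [Hzero Hcont]] Hv.
  assert (Hy : 0 < y) by (destruct (Rle_dec y 0); [rewrite Hzero in Hv; lra|lra]).
  destruct (IVT (fun x => phi x - v) 0 y) as [w [Hw Hwv]].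
  - apply continuity_minus; [exact Hcont|apply continuity_const; intros ? ?; reflexivity].
  - exact Hy.
  - rewrite Hzero by lra. lra.
  - lra.
  - exists w. split; [exact Hw|lra].
Qed.

(* The window is where [phi] runs from [phi y / 4] to [phi y / 2]; there the ratio [phi x / phi t]
   stays in [[phi y / (4 phi z), 1/2]] for every [t] in [[y, z]]. *)
Lemma cpe_uniform_pos phi y z : cont_nonneg_df phi -> 0 <= y <= z -> 0 < phi y ->
  exists k, 0 < k /\ forall t, y <= t <= z -> k <= cpe phi t.
Proof.
  intros Hphi Hyz Hy. pose proof Hphi as [Hmono _].
  assert (Hyz' : phi y <= phi z) by (apply Hmono; lra).
  destruct (cont_nonneg_df_level phi y (phi y / 4) Hphi ltac:(lra)) as [w1 [Hw1 Hq1]].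
  destruct (cont_nonneg_df_level phi y (phi y / 2) Hphi ltac:(lra)) as [w2 [Hw2 Hq2]].
  assert (Hw12 : w1 < w2).
  { destruct (Rlt_le_dec w1 w2) as [|Hle]; [assumption|].
    pose proof (Hmono w2 w1 Hle). lra. }
  set (alpha := phi y / 4 / phi z).
  assert (Halpha : 0 < alpha) by (unfold alpha; apply Rdiv_lt_0_compat; lra).
  assert (Hln2 : 0 < ln 2) by (pose proof ln_lt_2; lra).
  exists ((w2 - w1) * (alpha * ln 2)). split; [apply Rmult_lt_0_compat; nra|].
  intros t Ht.
  assert (Hqt : phi y <= phi t <= phi z) by (split; apply Hmono; lra).
  apply cpe_ge_window; [assumption|lra|lra|assumption| |lra].
  intros x Hx.
  assert (Hx' : phi y / 4 <= phi x <= phi y / 2) by (rewrite <- Hq1, <- Hq2; split; apply Hmono; lra).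
  unfold alpha, Rdiv. split.
  - apply Rmult_le_compat; [lra|left; apply Rinv_0_lt_compat; lra|lra|].
    apply Rinv_le_contravar; lra.
  - replace (/ 2) with (phi y * / 2 * / phi y) by (field; lra).
    apply Rmult_le_compat; [lra|left; apply Rinv_0_lt_compat; lra|lra|].
    apply Rinv_le_contravar; lra.
Qed.

Lemma crossing_within (P : R -> Prop) y z h : y <= z -> 0 < h -> P y -> ~ P z ->
  exists p t, y <= p <= t /\ t <= z /\ t - p <= h /\ P p /\ ~ P t.
Proof.
  intros Hyz Hh Hy Hz.
  assert (Hgrid : forall n : nat, P (Rmin (y + INR n * h) z) \/
            exists p t, y <= p <= t /\ t <= z /\ t - p <= h /\ P p /\ ~ P t).
  { induction n as [|n [IH|IH]]; [|clear Hz|right; exact IH].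
    - left. simpl. rewrite Rmult_0_l, Rplus_0_r, Rmin_left by lra. exact Hy.
    - set (p := Rmin (y + INR n * h) z) in IH. set (t := Rmin (y + INR (S n) * h) z).
      assert (Hpt : y <= p <= t /\ t <= z /\ t - p <= h).
      { unfold p, t, Rmin. rewrite S_INR. pose proof (pos_INR n).
        destruct (Rle_dec (y + INR n * h) z); destruct (Rle_dec (y + (INR n + 1) * h) z); nra. }
      destruct (classic (P t)) as [Ht|Ht]; [left; exact Ht|right; exists p, t; tauto]. }
  destruct (INR_archimed h (z - y) Hh) as [n Hn].
  destruct (Hgrid n) as [Hend|Hcross]; [|exact Hcross].
  rewrite Rmin_right in Hend by lra. contradiction.
Qed.

Lemma cont_nonneg_df_pos_of_cpe_le phi phi' y z :
  cont_nonneg_df phi -> cont_nonneg_df phi' -> 0 <= y <= z ->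
  0 < phi z -> 0 < phi' y ->
  (forall t, y <= t <= z -> 0 < phi t -> 0 < phi' t -> cpe phi' t <= cpe phi t) -> 0 < phi y.
Proof.
  intros Hphi Hphi' Hyz Hz Hy' Hle.
  destruct (Rle_lt_or_eq_dec _ _ (cont_nonneg_df_nonneg phi y Hphi)) as [|Hy0]; [assumption|exfalso].
  destruct (cpe_uniform_pos phi' y z Hphi' Hyz Hy') as [k [Hk Hlower]].
  destruct (crossing_within (fun x => phi x = 0) y z (k / 2)) as [p [t [Hp [Htz [Hpt [Hp0 Ht0]]]]]];
    [lra|lra|auto|lra|].
  assert (Ht : 0 < phi t) by (pose proof (cont_nonneg_df_nonneg phi t Hphi); lra).
  assert (Ht' : 0 < phi' t) by (pose proof (proj1 Hphi' y t ltac:(lra)); lra).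
  pose proof (Hle t ltac:(lra) Ht Ht').
  pose proof (cpe_le_dist_zero phi Hphi p t ltac:(lra) Hp0 Ht).
  pose proof (Hlower t ltac:(lra)).
  lra.
Qed.

Lemma cdcpe1_affine F a1 a2 c1 c2 t1 t2 : ac_nonneg_cdf F -> 0 < a1 -> 0 <= c1 <= t1 ->
  cdcpe1 (fun y1 y2 => F ((y1 - c1) / a1) ((y2 - c2) / a2)) t1 t2
  = a1 * cdcpe1 F ((t1 - c1) / a1) ((t2 - c2) / a2).
Proof. intros HF Ha Hc. exact (cpe_affine _ (cont_nonneg_df_section1 F _ HF) a1 c1 t1 Ha Hc). Qed.

Lemma cdcpe2_affine F a1 a2 c1 c2 t1 t2 : ac_nonneg_cdf F -> 0 < a2 -> 0 <= c2 <= t2 ->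
  cdcpe2 (fun y1 y2 => F ((y1 - c1) / a1) ((y2 - c2) / a2)) t1 t2
  = a2 * cdcpe2 F ((t1 - c1) / a1) ((t2 - c2) / a2).
Proof. intros HF Ha Hc. exact (cpe_affine _ (cont_nonneg_df_section2 F _ HF) a2 c2 t2 Ha Hc). Qed.

Section Comparison.

Variables F F' : R -> R -> R.
Hypotheses (HF : ac_nonneg_cdf F) (HF' : ac_nonneg_cdf F') (HFF' : cdcpe_le F F').
Variables s1 s2 s1' s2' : R.
Hypotheses (Hs1 : 0 <= s1' <= s1) (Hs2 : 0 <= s2' <= s2).
Hypotheses (Hpos : 0 < F s1 s2) (Hpos' : 0 < F' s1' s2').

Lemma cdcpe_le_pos_below : 0 < F s1' s2'.
Proof.
  assert (Hmid' : 0 < F' s1 s2')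
    by (pose proof (proj1 (cont_nonneg_df_section1 F' s2' HF') s1' s1); lra).
  assert (Hmid : 0 < F s1 s2').
  { apply (cont_nonneg_df_pos_of_cpe_le (fun x2 => F s1 x2) (fun x2 => F' s1 x2) s2' s2);
      auto using cont_nonneg_df_section2.
    intros t Ht Hpt Hpt'. exact (proj2 (HFF' s1 t ltac:(lra) ltac:(lra) Hpt Hpt')). }
  apply (cont_nonneg_df_pos_of_cpe_le (fun x1 => F x1 s2') (fun x1 => F' x1 s2') s1' s1);
    auto using cont_nonneg_df_section1.
  intros t Ht Hpt Hpt'. exact (proj1 (HFF' t s2' ltac:(lra) ltac:(lra) Hpt Hpt')).
Qed.

Lemma cdcpe_le_below : cdcpe_increasing F \/ cdcpe_increasing F' ->
  cdcpe1 F' s1' s2' <= cdcpe1 F s1 s2 /\ cdcpe2 F' s1' s2' <= cdcpe2 F s1 s2.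
Proof.
  intros [[Hinc1 Hinc2]|[Hinc1 Hinc2]].
  - pose proof cdcpe_le_pos_below as Hpos_below.
    assert (0 < F s1 s2') by (pose proof (proj1 (cont_nonneg_df_section1 F s2' HF) s1' s1); lra).
    destruct (HFF' s1' s2' ltac:(lra) ltac:(lra) Hpos_below Hpos').
    destruct (Hinc1 s1' s1 s2' Hpos_below ltac:(lra)).
    destruct (Hinc2 s1 s2' s2 ltac:(lra) ltac:(lra)).
    split; lra.
  - assert (0 < F' s1 s2') by (pose proof (proj1 (cont_nonneg_df_section1 F' s2' HF') s1' s1); lra).
    assert (0 < F' s1 s2) by (pose proof (proj1 (cont_nonneg_df_section2 F' s1 HF') s2' s2); lra).
    destruct (Hinc1 s1' s1 s2' Hpos' ltac:(lra)).
    destruct (Hinc2 s1 s2' s2 ltac:(lra) ltac:(lra)).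
    destruct (HFF' s1 s2 ltac:(lra) ltac:(lra) Hpos ltac:(lra)).
    split; lra.
Qed.

End Comparison.

Lemma shift_scale_le a c d t : 0 < a -> c <= d <= t -> 0 <= (t - d) / a <= (t - c) / a.
Proof.
  intros Ha Hcdt. unfold Rdiv. pose proof (Rinv_0_lt_compat a Ha).
  split; [apply Rmult_le_pos|apply Rmult_le_compat_r]; lra.
Qed.

Theorem theorem3p8 (F F' G G' : R -> R -> R) (a1 a2 c1 c2 d1 d2 : R)
  (hF : ac_nonneg_cdf F) (hF' : ac_nonneg_cdf F')
  (hG : ac_nonneg_cdf G) (hG' : ac_nonneg_cdf G')
  (ha1 : 0 < a1) (ha2 : 0 < a2) (hc1 : 0 < c1) (hc2 : 0 < c2)
  (hcd1 : c1 <= d1) (hcd2 : c2 <= d2)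
  (hGF : forall y1 y2, G y1 y2 = F ((y1 - c1) / a1) ((y2 - c2) / a2))
  (hGF' : forall y1 y2, G' y1 y2 = F' ((y1 - d1) / a1) ((y2 - d2) / a2))
  (hXX' : cdcpe_le F F')
  (hmono : cdcpe_increasing F \/ cdcpe_increasing F') :
  forall t1 t2, d1 <= t1 -> d2 <= t2 -> 0 < G t1 t2 -> 0 < G' t1 t2 ->
    cdcpe1 G' t1 t2 <= cdcpe1 G t1 t2 /\ cdcpe2 G' t1 t2 <= cdcpe2 G t1 t2.
Proof.
  intros t1 t2 Ht1 Ht2 HG HG'.
  assert (HGe : G = fun y1 y2 => F ((y1 - c1) / a1) ((y2 - c2) / a2))
    by (do 2 (apply functional_extensionality; intro); apply hGF).
  assert (HGe' : G' = fun y1 y2 => F' ((y1 - d1) / a1) ((y2 - d2) / a2))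
    by (do 2 (apply functional_extensionality; intro); apply hGF').
  subst G G'.
  rewrite !cdcpe1_affine, !cdcpe2_affine by (assumption || lra).
  destruct (cdcpe_le_below F F' hF hF' hXX'
              ((t1 - c1) / a1) ((t2 - c2) / a2) ((t1 - d1) / a1) ((t2 - d2) / a2))
    as [H1 H2]; auto using shift_scale_le.
  split; apply Rmult_le_compat_l; lra.
Qed.
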